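(* Let $N\ge 1$ and $\nu\in\mathbb S_N$. For $k\in\mathbb Z$ put $F_k(\nu):=\mathrm{Dim}_{1,N}(k,\nu)/\mathrm{Dim}_N\nu$, and set $$H^*(t;\nu)=\prod_{j=1}^N\frac{t+j}{t+j-\nu_j},$$ where $t$ is a formal variable. Then the following identity of rational functions of $t$ holds: $$H^*(t;\nu)=\sum_{k\in\mathbb Z}F_k(\nu)\,\frac{(t+1)(t+2)\cdots(t+N)}{(t+1-k)(t+2-k)\cdots(t+N-k)}.$$ The sum is finite, because $F_k(\nu)=0$ unless $\nu_N\le k\le\nu_1$.
   Context: For $N\ge1$, a signature of length $N$ is an $N$-tuple of integers $\nu=(\nu_1\ge\nu_2\ge\dots\ge\nu_N)$, and $\mathbb S_N\subset\mathbb Z^N$ denotes the set of all of them; in particular $\mathbb S_1=\mathbb Z$. For $\nu\in\mathbb S_N$ and $\lambda\in\mathbb S_{N-1}$ write $\lambda\prec\nu$ (the two signatures are interlaced) if $\nu_i\ge\lambda_i\ge\nu_{i+1}$ for $i=1,\dots,N-1$. Weyl's dimension is $\mathrm{Dim}_N\nu=\prod_{1\le i<j\le N}\frac{\nu_i-\nu_j-i+j}{j-i}$. For $K<N$, $\kappa\in\mathbb S_K$ and $\nu\in\mathbb S_N$, $\mathrm{Dim}_{K,N}(\kappa,\nu)$ is the number of chains $\kappa=\lambda^{(K)}\prec\lambda^{(K+1)}\prec\dots\prec\lambda^{(N)}=\nu$ with $\lambda^{(j)}\in\mathbb S_j$. *)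

From HB Require Import structures.
From mathcomp Require Import all_boot all_order all_algebra fraction.
Set Implicit Arguments. Unset Strict Implicit. Unset Printing Implicit Defensive.
Import Order.TTheory GRing.Theory Num.Theory.
Local Open Scope ring_scope.

(* Signatures of length N are represented as s : seq int with size s = N,
   non-increasing; entry nu_i (1-based in the paper) is nu`_(i-1). *)
Definition is_signature (N : nat) (s : seq int) : bool :=
  (size s == N) && sorted (fun a b : int => b <= a) s.

Definition irange (a b : int) : seq int :=
  if a <= b then [seq a + (i%:Z) | i <- iota 0 `|b - a|.+1] else [::].

(* all lambda in S_{N-1} with lambda ≺ nu, for nu in S_N (N >= 1):
   nu_i >= lambda_i >= nu_{i+1}. *)
Fixpoint interl (nu : seq int) : seq (seq int) :=
  match nu with
  | [::] => [::]
  | [:: _] => [:: [::]]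
  | x :: ((y :: _) as nu') =>
      [seq l :: s | l <- irange y x, s <- interl nu']
  end.

(* number of chains kappa = lambda^(N-n) ≺ ... ≺ lambda^(N) = nu of length n *)
Fixpoint chains (n : nat) (kappa nu : seq int) : nat :=
  match n with
  | 0 => (nu == kappa : nat)
  | n'.+1 => sumn [seq chains n' kappa l | l <- interl nu]
  end.

Definition DimKN (K N : nat) (kappa nu : seq int) : nat := chains (N - K) kappa nu.

Definition DimN (N : nat) (nu : seq int) : rat :=
  \prod_(i < N) \prod_(j < N | (i < j)%N)
     (((nu`_i - nu`_j - (i : nat)%:Z + (j : nat)%:Z)%:~R : rat) / ((j - i)%N)%:R).

Definition Fk (N : nat) (k : int) (nu : seq int) : rat :=
  ((DimKN 1 N [:: k] nu)%:R : rat) / DimN N nu.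

Definition tvar : {fraction {poly rat}} := FracField.tofrac ('X : {poly rat}).

Definition cst (q : rat) : {fraction {poly rat}} := FracField.tofrac (q%:P).

Definition Hstar (N : nat) (nu : seq int) : {fraction {poly rat}} :=
  \prod_(j < N) ((tvar + ((j.+1)%:R)) / (tvar + ((j.+1)%:R) - (nu`_j)%:~R)).

Definition ratk (N : nat) (k : int) : {fraction {poly rat}} :=
  \prod_(j < N) ((tvar + ((j.+1)%:R)) / (tvar + ((j.+1)%:R) - k%:~R)).

(* Put [y_j = nu_j - j] and let [W(s, y)] be the matrix with first row
   [1/(s - y_j)] and the rising products [(y_j + 1) ... (y_j + r)],
   [r = 0, ..., N - 2], below it.  By a Cauchy-Vandermonde evaluation,
   [Dim_N nu * H*(s; nu)] is a constant times [(s + 1) ... (s + N) det W(s, y)].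
   Summing [det W(s, y) - det W(s + 1, y)] over the box of signatures [l]
   interlacing [nu] telescopes column by column, and a row of ones in the next
   matrix turns the result back into a determinant of the same kind.  This
   gives the branching rule
     N Dim nu H*(s; nu)
       = sum_(l ≺ nu) Dim l ((s + N + 1) H*(s; l) - (s + 1) H*(s + 1; l)).
   For a constant signature [(k, ..., k)] it is a recursion for the summands
   [(t + 1) ... (t + N) / ((t + 1 - k) ... (t + N - k))], so both sides of the
   theorem satisfy the same recursion along Gelfand-Tsetlin chains, and the
   identity follows by induction on [N]. *)

From HB Require Import structures.
From mathcomp Require Import all_boot all_order all_algebra fraction zify ring perm.
Set Implicit Arguments. Unset Strict Implicit. Unset Printing Implicit Defensive.
Import Order.TTheory GRing.Theory Num.Theory.
Local Open Scope ring_scope.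

Lemma mem_irange (a b x : int) : (x \in irange a b) = (a <= x <= b).
Proof.
rewrite /irange; case: ifP => hab; last by apply/esym/negP => /andP[]; lia.
apply/mapP/idP => [[i] | /andP[hax hxb]]; last by exists `|x - a|%N; rewrite ?mem_iota; lia.
by rewrite mem_iota => /andP[_ hi] ->; lia.
Qed.

Lemma irange_uniq (a b : int) : uniq (irange a b).
Proof.
rewrite /irange; case: ifP => // _; rewrite map_inj_uniq ?iota_uniq //.
by move=> i j /addrI [].
Qed.

Lemma irange1 (a : int) : irange a a = [:: a].
Proof. by rewrite /irange lexx subrr /= addr0. Qed.

Lemma telescope_irange (V : zmodType) (g : int -> V) (a b : int) : a <= b ->
  \sum_(x <- irange a b) (g x - g (x - 1)) = g b - g (a - 1).
Proof.
move=> hab; rewrite /irange hab big_map.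
have -> : g b - g (a - 1) = g (a + `|b - a|.+1%:Z - 1) - g (a + 0%:Z - 1).
  by congr (g _ - g _); lia.
rewrite -(telescope_sumr (fun i => g (a + i%:Z - 1)) (leq0n _)).
by apply: eq_bigr => i _; rewrite (_ : a + i.+1%:Z - 1 = a + i%:Z) ?addr0 //; lia.
Qed.

Lemma interl_bounds (nu l : seq int) : l \in interl nu ->
  size l = (size nu).-1 /\ forall i, (i < size l)%N -> nu`_i.+1 <= l`_i <= nu`_i.
Proof.
elim: nu l => [|x [|y nu] IH] l //=; first by rewrite mem_seq1 => /eqP ->.
case/allpairsPdep=> a [l' [ha hl' ->]]; have [hs hb] := IH l' hl'.
by split=> [|[|i]] /=; [rewrite hs | rewrite -mem_irange | exact: hb].
Qed.

Lemma interl_nseq n (k : int) : interl (nseq n.+1 k) = [:: nseq n k].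
Proof. by elim: n => //= n ->; rewrite irange1. Qed.

Lemma is_signature_nseq n (k : int) : is_signature n (nseq n k).
Proof.
rewrite /is_signature size_nseq eqxx /=.
by elim: n => [|[|n] IH] //=; rewrite lexx.
Qed.

Lemma DimN_nseq n (k : int) : DimN n (nseq n k) = 1.
Proof.
rewrite /DimN big1 // => i _; rewrite big1 // => j lij.
rewrite !nth_nseq !ltn_ord subrr add0r addrC subzn ?(ltnW lij) // -pmulrn.
by rewrite divff // pnatr_eq0 subn_eq0 -ltnNge.
Qed.

Lemma signature_nth_le N (nu : seq int) i j : is_signature N nu ->
  (i <= j < N)%N -> nu`_j <= nu`_i.
Proof.
case/andP=> /eqP hs so /andP[hij hj].
apply: (sorted_leq_nth (fun a b c h1 h2 => le_trans h2 h1) (@lexx _ _) 0 so);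
  by rewrite ?inE ?hs // (leq_ltn_trans hij).
Qed.

Lemma DimN_neq0 N nu : is_signature N nu -> DimN N nu != 0.
Proof.
move=> hsig; apply/prodf_neq0 => i _; apply/prodf_neq0 => j lij.
rewrite mulf_neq0 ?invr_eq0 ?pnatr_eq0 -?lt0n ?subn_gt0 // intr_eq0.
have := signature_nth_le hsig (i := i) (j := j); rewrite (ltnW lij) ltn_ord => /(_ isT).
by move: lij; lia.
Qed.

Lemma signature_interl n (nu l : seq int) : is_signature n.+2 nu ->
  l \in interl nu -> [/\ is_signature n.+1 l, nu`_n.+1 <= l`_n & l`_0 <= nu`_0].
Proof.
move=> /andP[/eqP hs _] /interl_bounds[]; rewrite hs /= => hl hb.
have hb' i : (i < n.+1)%N -> nu`_i.+1 <= l`_i <= nu`_i by rewrite -hl; apply: hb.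
have /andP[hn _] := hb' n (ltnSn n); have /andP[_ h0] := hb' 0%N isT.
split=> //; rewrite /is_signature hl eqxx; apply/sortedP => i; rewrite hl => hi.
have /andP[_ hi1] := hb' i.+1 hi; have /andP[hi0 _] := hb' i (ltnW hi).
exact: le_trans hi1 hi0.
Qed.

Lemma chains_support n (k : int) (nu : seq int) : size nu = n.+1 ->
  chains n [:: k] nu != 0%N -> nu`_n <= k <= nu`_0.
Proof.
elim: n nu => [|n IH] nu hs /=; first by case: (nu =P [:: k]) => [-> _|] /=; rewrite ?lexx.
rewrite sumnE big_map sum_nat_seq_neq0 => /hasP[l hl /= hc].
have [hsl hb] := interl_bounds hl; rewrite hs /= in hsl.
case/andP: (IH l hsl hc) => hlk hkl.
have /andP[hnl _] : nu`_n.+1 <= l`_n <= nu`_n by apply: hb; rewrite hsl.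
have /andP[_ hl0] : nu`_1 <= l`_0 <= nu`_0 by apply: hb; rewrite hsl.
by rewrite (le_trans hnl hlk) (le_trans hkl hl0).
Qed.

Lemma big_interl_prod (R : comNzRingType) (nu : seq int) (f : nat -> int -> R) :
  (0 < size nu)%N ->
  \sum_(l <- interl nu) \prod_(i < (size nu).-1) f i l`_i =
  \prod_(i < (size nu).-1) \sum_(x <- irange nu`_i.+1 nu`_i) f i x.
Proof.
elim: nu f => [|x [|y nu] IH] f //= _; first by rewrite big_seq1 !big_ord0.
rewrite big_allpairs_dep big_ord_recl mulr_suml; apply: eq_bigr => a _.
under eq_bigr => l _ do rewrite big_ord_recl.
rewrite /= -mulr_sumr; congr (_ * _).
have /= -> := IH (fun i => f i.+1) isT.
by apply: eq_bigr => i _; rewrite /bump leq0n.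
Qed.

(* The interlacing [l] form a box and column [j] only depends on [l_j], so the
   sum enters each column by multilinearity. *)
Lemma big_interl_det (R : comNzRingType) n (nu : seq int)
    (G : 'I_n.+1 -> 'I_n.+1 -> int -> R) : size nu = n.+2 ->
  \sum_(l <- interl nu) \det (\matrix_(i, j) G i j l`_j) =
  \det (\matrix_(i, j) \sum_(x <- irange nu`_j.+1 nu`_j) G i j x).
Proof.
move=> hs; under eq_bigr do rewrite -det_tr.
rewrite -det_tr /determinant exchange_big /=; apply: eq_bigr => s _.
rewrite -mulr_sumr; congr (_ * _).
pose f j x := G (s (inord j)) (inord j) x.
transitivity (\sum_(l <- interl nu) \prod_(i < n.+1) f i l`_i).
  by apply: eq_bigr => l _; apply: eq_bigr => i _; rewrite !mxE /f inord_val.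
have := @big_interl_prod _ nu f; rewrite hs => -> //.
by apply: eq_bigr => i _; rewrite !mxE /f inord_val.
Qed.

Lemma det_horner_mx (R : comNzRingType) m (f : 'I_m -> {poly R}) (y : 'I_m -> R) :
  (forall i : 'I_m, size (f i) <= i.+1)%N ->
  \det (\matrix_(i, j) (f i).[y j]) =
  \prod_i (f i)`_i * \prod_(i < m) \prod_(j < m | (i < j)%N) (y j - y i).
Proof.
move=> szf; pose C : 'M[R]_m := \matrix_(i, k) (f i)`_k.
have -> : \matrix_(i, j) (f i).[y j] = C *m Vandermonde m (\row_j y j).
  apply/matrixP => i j; rewrite !mxE (horner_coef_wide _ (leq_trans (szf i) (ltn_ord i))).
  by apply: eq_bigr => k _; rewrite !mxE.
rewrite det_mulmx det_Vandermonde det_trig.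
  congr (_ * _); first by apply: eq_bigr => i _; rewrite mxE.
  by apply: eq_bigr => i _; apply: eq_bigr => j _; rewrite !mxE.
apply/is_trig_mxP => i j lij; rewrite mxE nth_default //.
exact: leq_trans (szf i) lij.
Qed.

Definition rise (R : nzRingType) (a : nat) (y : R) : R := \prod_(r < a) (y + r.+1%:R).

Definition rise_poly (R : nzRingType) (a : nat) : {poly R} :=
  \prod_(r < a) ('X - (- r.+1%:R)%:P).

Lemma size_rise_poly (R : nzRingType) a : size (rise_poly R a) = a.+1.
Proof. by rewrite size_prod_XsubC -[in RHS](size_enum_ord a) enumT. Qed.

Lemma rise_poly_monic (R : nzRingType) a : rise_poly R a \is monic.
Proof. exact: monic_prod_XsubC. Qed.

Lemma horner_rise_poly (R : comNzRingType) a y : (rise_poly R a).[y] = rise a y.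
Proof. by rewrite horner_prod; apply: eq_bigr => r _; rewrite hornerXsubC opprK. Qed.

Lemma riseSr (R : nzRingType) a (y : R) : rise a.+1 y = rise a y * (y + a.+1%:R).
Proof. by rewrite /rise big_ord_recr. Qed.

Lemma riseSl (R : comNzRingType) a (y : R) : rise a.+1 y = (y + 1) * rise a (y + 1).
Proof.
rewrite /rise big_ord_recl; congr (_ * _); last apply: eq_bigr => r _.
by rewrite lift0 -addrA [1 + _]addrC natr1.
Qed.

Lemma rise_diff (R : comNzRingType) a (y : R) :
  rise a.+1 y - rise a.+1 (y - 1) = a.+1%:R * rise a y.
Proof. by rewrite [rise _ y]riseSr [rise _ (y - 1)]riseSl subrK; ring. Qed.

Definition vdm_prod (R : nzRingType) m (y : nat -> R) : R :=
  \prod_(i < m) \prod_(j < m | (i < j)%N) (y j - y i).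

Lemma vdm_prodS (R : comNzRingType) m (y : nat -> R) :
  vdm_prod m.+1 y = vdm_prod m y * \prod_(i < m) (y m - y i).
Proof.
rewrite /vdm_prod big_ord_recr /= [X in _ * X]big1 ?mulr1 => [|j]; last first.
  by rewrite ltnNge -ltnS ltn_ord.
rewrite -big_split; apply: eq_bigr => i _ /=.
by rewrite big_mkcond big_ord_recr /= ltn_ord -big_mkcond.
Qed.

Definition cauchy_vdm_mx (F : fieldType) n (a : F) (y : nat -> F) : 'M[F]_n :=
  \matrix_(i, j) (if i == 0 :> nat then (a - y j)^-1 else rise i.-1 (y j)).

(* Scaling column [j] by [a - y j] turns row [i] into the values at [y j] of a
   polynomial of degree [i], with leading coefficient [-1] for [i > 0]. *)
Lemma det_cauchy_vdm_mx (F : fieldType) n (a : F) (y : nat -> F) :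
  (forall j : 'I_n.+1, a - y j != 0) ->
  \det (cauchy_vdm_mx n.+1 a y) * \prod_(j < n.+1) (a - y j) =
  (-1) ^+ n * vdm_prod n.+1 y.
Proof.
move=> hy; pose p i : {poly F} := rise_poly F i * ('X - a%:P).
pose f (i : 'I_n.+1) := if i == 0 :> nat then 1 else - p i.-1.
have size_p i : size (p i) = i.+2.
  rewrite size_Mmonic ?monicXsubC ?size_rise_poly ?size_XsubC ?addn2 //.
  by rewrite -size_poly_eq0 size_rise_poly.
have -> : \prod_(j < n.+1) (a - y j) = \det (diag_mx (\row_(j < n.+1) (a - y j))).
  by rewrite det_diag; apply: eq_bigr => j _; rewrite mxE.
rewrite -det_mulmx mul_mx_diag.
rewrite (_ : \matrix_(i, j) _ = \matrix_(i, j) (f i).[y j]); last first.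
  apply/matrixP => i j; rewrite !mxE /f; case: ifP => _.
    by rewrite hornerC mulVf.
  by rewrite hornerN hornerM horner_rise_poly hornerXsubC -mulrN opprB.
rewrite det_horner_mx => [|i]; last first.
  rewrite /f; case: ifP => i0; rewrite ?size_poly1 ?size_polyN ?size_p //.
  by case: (val i) i0.
congr (_ * _); rewrite big_ord_recl /f /= coefC eqxx mul1r.
rewrite -[in RHS](card_ord n) -prodr_const.
apply: eq_bigr => i _; rewrite /bump leq0n add0n add1n coefN.
rewrite -[i.+1]/((i.+2).-1) -(size_p i) -lead_coefE.
by rewrite lead_coef_Mmonic ?monicXsubC // (eqP (rise_poly_monic F i)).
Qed.

Lemma det_cauchy_vdm_mxB (F : fieldType) n (a b : F) (y : nat -> F) :
  \det (cauchy_vdm_mx n.+1 a y) - \det (cauchy_vdm_mx n.+1 b y) =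
  \det (\matrix_(i < n.+1, j < n.+1)
     (if i == 0 :> nat then (a - y j)^-1 - (b - y j)^-1 else rise i.-1 (y j))).
Proof.
rewrite -[X in X - _]mul1r -mulN1r [RHS](determinant_multilinear (i0 := ord0)
  (b := 1) (c := -1) (B := cauchy_vdm_mx n.+1 a y) (C := cauchy_vdm_mx n.+1 b y)) //.
- by apply/rowP => j; rewrite !mxE /=; ring.
- by apply/matrixP => i j; rewrite !mxE.
- by apply/matrixP => i j; rewrite !mxE.
Qed.

(* Right multiplication by the unitriangular [U] replaces each column but the last
   by its difference with the next one; row 1 becomes [0 ... 0 1]. *)
Lemma det_row1_ones (R : comNzRingType) k (A : 'M[R]_k.+2) :
  (forall j, A (lift ord0 ord0) j = 1) ->
  \det A = (-1) ^+ k * \det (\matrix_(i, j)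
     (A (lift (lift ord0 ord0) i) (lift ord_max j) -
      A (lift (lift ord0 ord0) i) (lift ord0 j))).
Proof.
move=> row1; set i1 := lift ord0 ord0.
pose S : 'M[R]_k.+2 := \matrix_(i, j) (i == j.+1 :> nat)%:R.
pose U : 'M[R]_k.+2 := 1%:M - S.
have detU : \det U = 1.
  rewrite det_trig; last first.
    apply/is_trig_mxP => i j lij; rewrite !mxE -val_eqE (ltn_eqF lij).
    by rewrite (ltn_eqF (ltnW lij : (i < j.+1)%N)) subr0.
  by rewrite big1 // => i _; rewrite !mxE eqxx (ltn_eqF (ltnSn i)) subr0.
have AS i (j : 'I_k.+1) : (A *m S) i (lift ord_max j) = A i (lift ord0 j).
  have bump0 : bump 0 j = j.+1 by rewrite /bump leq0n add1n.
  have bump_max : bump k.+1 j = j by rewrite /bump leqNgt ltn_ord.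
  rewrite mxE (bigD1 (lift ord0 j)) //= !mxE /= bump0 bump_max eqxx mulr1.
  rewrite big1 ?addr0 // => l hl; rewrite !mxE /= bump_max.
  rewrite (_ : (l == _ :> nat) = false) ?mulr0 //; apply/negbTE; apply: contra hl.
  by move=> /eqP hl; apply/eqP/val_inj; rewrite /= hl bump0.
have ASmax i : (A *m S) i ord_max = 0.
  rewrite mxE big1 // => l _; rewrite !mxE (_ : (l == _ :> nat) = false) ?mulr0 //.
  by apply/negbTE; rewrite neq_ltn (leq_trans (ltn_ord l)).
have AU i j : (A *m U) i j = A i j - (A *m S) i j.
  by rewrite /U mulmxBr mulmx1 mxE [X in _ + X]mxE.
have -> : \det A = \det (A *m U) by rewrite det_mulmx detU mulr1.
rewrite (expand_det_row _ i1) (bigD1 ord_max) //=.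
rewrite big1 ?addr0 => [|j hj]; last first.
  case: (unliftP ord_max j) => [j' ->|e]; last by rewrite e eqxx in hj.
  by rewrite AU AS !row1 subrr mul0r.
rewrite AU ASmax subr0 row1 mul1r /cofactor (_ : (i1 + ord_max)%N = k.+2) //.
rewrite !exprS !mulN1r opprK; congr (_ * _); apply: congr1; apply/matrixP => i j.
by rewrite [RHS]mxE -AS -AU !mxE.
Qed.

Section BranchingRule.

(* Any field containing [rat] through [iota]; the theorem uses [F = Q(t)]. *)
Variables (F : fieldType) (iota : {rmorphism rat -> F}).

Lemma natf_neq0 n : (n.+1%:R : F) != 0.
Proof. by rewrite -(rmorph_nat iota) fmorph_eq0 pnatr_eq0. Qed.

Definition nonintegral (s : F) := forall z : int, s != z%:~R.

Lemma nonintegral_subz s (z : int) : nonintegral s -> s - z%:~R != 0.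
Proof. by move=> hs; rewrite subr_eq0; apply: hs. Qed.

Lemma nonintegralD1 s : nonintegral s -> nonintegral (s + 1).
Proof.
by move=> hs z; rewrite -subr_eq0 -addrA -opprB -[1]/(1%:~R) -intrB nonintegral_subz.
Qed.

Definition hstar m (nu : seq int) (s : F) : F :=
  \prod_(j < m) ((s + j.+1%:R) / (s + j.+1%:R - (nu`_j)%:~R)).

(* [nu_j - j] in the paper's 1-based indexing.  As [nth] defaults to [0],
   [shifted [::]] are the coordinates of the zero signature of any length. *)
Definition shifted (nu : seq int) (j : nat) : F := (nu`_j)%:~R - j.+1%:R.

Lemma hstar_cauchy m nu s :
  hstar m nu s = rise m s / \prod_(j < m) (s - shifted nu j).
Proof.
rewrite /hstar prodf_div; congr (_ / _); apply: eq_bigr => j _.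
by rewrite /shifted opprB addrA addrAC.
Qed.

Lemma DimN_vdm m nu :
  iota (DimN m nu) = vdm_prod m (shifted nu) / vdm_prod m (shifted [::]).
Proof.
rewrite /DimN rmorph_prod /vdm_prod -prodf_div; apply: eq_bigr => i _.
rewrite rmorph_prod -prodf_div; apply: eq_bigr => j lij.
rewrite fmorph_div rmorph_int rmorph_nat /shifted !nth_nil mulr0z natrB ?(ltnW lij) //.
rewrite !intrD !intrN -!pmulrn -!natr1 -[LHS]mulrNN -invrN; congr (_ / _); ring.
Qed.

Lemma vdm_shifted0S m :
  vdm_prod m.+1 (shifted [::]) = vdm_prod m (shifted [::]) * ((-1) ^+ m * m`!%:R).
Proof.
have -> : m`!%:R = \prod_(i < m) (i.+1%:R : F).
  by rewrite fact_prod big_add1 big_mkord natr_prod.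
rewrite vdm_prodS -[in (-1) ^+ m](card_ord m) -prodr_const; congr (_ * _).
rewrite -big_split (reindex_inj rev_ord_inj); apply: eq_bigr => i _.
rewrite /shifted /= !nth_nil mulr0z subnSK // natrB 1?ltnW // mulN1r -!natr1.
by rewrite !add0r opprB; ring.
Qed.

Lemma vdm_shifted0_neq0 m : vdm_prod m (shifted [::]) != 0.
Proof.
elim: m => [|m IH]; first by rewrite /vdm_prod big_ord0 oner_neq0.
rewrite vdm_shifted0S !mulf_neq0 ?signr_eq0 // -(prednK (fact_gt0 m)); exact: natf_neq0.
Qed.

Lemma nonintegral_sub_shifted s nu j : nonintegral s -> s - shifted nu j != 0.
Proof. by rewrite /shifted pmulrn -intrB; apply: nonintegral_subz. Qed.

Lemma DimN_hstar_cauchy m nu s : nonintegral s ->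
  iota (DimN m.+1 nu) * hstar m.+1 nu s =
  (-1) ^+ m * rise m.+1 s / vdm_prod m.+1 (shifted [::]) *
  \det (cauchy_vdm_mx m.+1 s (shifted nu)).
Proof.
move=> hs; have hP : \prod_(j < m.+1) (s - shifted nu j) != 0.
  by apply/prodf_neq0 => j _; apply: nonintegral_sub_shifted.
have cv := det_cauchy_vdm_mx (fun j : 'I_m.+1 => nonintegral_sub_shifted nu j hs).
rewrite DimN_vdm hstar_cauchy -[vdm_prod m.+1 _](signrMK m) -cv; field.
by rewrite hP vdm_shifted0_neq0.
Qed.

Lemma prod_inv_maxn1 n : \prod_(i < n.+1) ((maxn i 1)%:R : F)^-1 = (n`!%:R)^-1.
Proof.
rewrite prodfV -natr_prod big_ord_recl /= mul1n fact_prod big_add1 big_mkord.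
by congr (_%:R^-1); apply: eq_bigr => i _; rewrite /bump leq0n add1n maxnE.
Qed.

(* Each column telescopes to a difference of two consecutive columns of the
   next Cauchy-Vandermonde matrix, row [i > 0] being divided by [i]. *)
Lemma sum_interl_det_cauchy n nu s : is_signature n.+2 nu ->
  \sum_(l <- interl nu) (\det (cauchy_vdm_mx n.+1 s (shifted l)) -
                         \det (cauchy_vdm_mx n.+1 (s + 1) (shifted l))) =
  (-1) ^+ n / n`!%:R * \det (cauchy_vdm_mx n.+2 s (shifted nu)).
Proof.
move=> hsig; have [/eqP hs so] := andP hsig; set y := shifted nu.
pose z j (x : int) : F := x%:~R - j.+1%:R.
pose G (i j : 'I_n.+1) x := if i == 0 :> nat then (s - z j x)^-1 - (s + 1 - z j x)^-1
                            else rise i.-1 (z j x).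
pose W := cauchy_vdm_mx n.+2 s y.
pose B : 'M[F]_n.+1 := \matrix_(i, j) (W (lift (lift ord0 ord0) i) (lift ord_max j) -
                          W (lift (lift ord0 ord0) i) (lift ord0 j)).
have colsum (i j : 'I_n.+1) :
    \sum_(x <- irange nu`_j.+1 nu`_j) G i j x = ((maxn i 1)%:R)^-1 * B i j.
  have le_nu : nu`_j.+1 <= nu`_j by apply: (sortedP 0 so); rewrite hs ltnS.
  have zB1 x : z j (x - 1) = z j x - 1 by rewrite /z intrB addrAC.
  have zlow : z j (nu`_j.+1 - 1) = y j.+1 by rewrite zB1 /z /y /shifted -addrA -opprD natr1.
  rewrite !mxE /G /W /B /= /bump !leq0n add1n (leq_gtF (ltn_ord j : (j <= n)%N)) /= add0n.
  case: (nat_of_ord i) => [|i'] /=.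
    rewrite invr1 mul1r.
    have sB1 x : s + 1 - z j x = s - z j (x - 1) by rewrite zB1; ring.
    under eq_bigr => x _ do rewrite sB1.
    by rewrite (telescope_irange (fun x => (s - z j x)^-1)) // zlow.
  under eq_bigr => x _ do rewrite -[rise i' _](mulKf (natf_neq0 i')) -rise_diff -zB1.
  by rewrite -mulr_sumr (telescope_irange (fun x => rise i'.+1 (z j x))) // zlow.
have sumB : \sum_(l <- interl nu) \det (\matrix_(i, j) G i j l`_j) =
            (n`!%:R)^-1 * \det B.
  rewrite big_interl_det // -prod_inv_maxn1.
  have -> : \prod_(i < n.+1) ((maxn i 1)%:R : F)^-1 =
            \det (diag_mx (\row_(i < n.+1) ((maxn i 1)%:R)^-1)).
    by rewrite det_diag; apply: eq_bigr => i _; rewrite mxE.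
  rewrite -det_mulmx mul_diag_mx; congr (\det _); apply/matrixP => i j.
  by rewrite !mxE colsum /B /W !mxE.
rewrite -/W (det_row1_ones (A := W)) => [|j]; last by rewrite !mxE /= /rise big_ord0.
rewrite mulrAC signrMK mulrC -sumB; apply: eq_bigr => l _.
by rewrite det_cauchy_vdm_mxB; congr (\det _); apply/matrixP => i j; rewrite !mxE.
Qed.

Lemma branching_rule n nu s : nonintegral s -> is_signature n.+2 nu ->
  \sum_(l <- interl nu) iota (DimN n.+1 l) *
     ((s + n.+2%:R) * hstar n.+1 l s - (s + 1) * hstar n.+1 l (s + 1)) =
  n.+1%:R * (iota (DimN n.+2 nu) * hstar n.+2 nu s).
Proof.
move=> hs hsig; set c := vdm_prod n.+1 (shifted [::]).
have summand l : iota (DimN n.+1 l) *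
    ((s + n.+2%:R) * hstar n.+1 l s - (s + 1) * hstar n.+1 l (s + 1)) =
  (-1) ^+ n * rise n.+2 s / c * (\det (cauchy_vdm_mx n.+1 s (shifted l)) -
                                 \det (cauchy_vdm_mx n.+1 (s + 1) (shifted l))).
  rewrite mulrBr mulrCA [X in _ - X]mulrCA (DimN_hstar_cauchy _ _ hs).
  rewrite (DimN_hstar_cauchy _ _ (nonintegralD1 hs)) [RHS]mulrBr.
  by rewrite -/c {1}(riseSr n.+1 s) (riseSl n.+1 s); ring.
under eq_bigr do rewrite summand.
rewrite -mulr_sumr sum_interl_det_cauchy // DimN_hstar_cauchy //.
rewrite vdm_shifted0S -/c factS natrM.
have hc : c != 0 := vdm_shifted0_neq0 n.+1.
have hfact : n`!%:R != 0 :> F by rewrite -(prednK (fact_gt0 n)) natf_neq0.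
have hn1 : 1 + n%:R != 0 :> F by rewrite addrC natr1 natf_neq0.
rewrite exprS -signr_odd.
by case: (odd n); rewrite ?expr0 ?expr1; field; rewrite hc hfact hn1 ?oppr_eq0 ?oner_eq0.
Qed.

Lemma hstar_nseqS n k s : nonintegral s ->
  hstar n.+2 (nseq n.+2 k) s =
  ((s + n.+2%:R) * hstar n.+1 (nseq n.+1 k) s -
   (s + 1) * hstar n.+1 (nseq n.+1 k) (s + 1)) / n.+1%:R.
Proof.
move=> hs; have := branching_rule hs (is_signature_nseq n.+2 k).
rewrite interl_nseq big_seq1 !DimN_nseq rmorph1 !mul1r => ->.
by rewrite mulrC mulKf ?natf_neq0.
Qed.

Lemma sum_chains_hstar n nu (c d : int) s :
  nonintegral s -> is_signature n.+1 nu -> c <= nu`_n -> nu`_0 <= d ->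
  \sum_(k <- irange c d) (chains n [:: k] nu)%:R * hstar n.+1 (nseq n.+1 k) s =
  iota (DimN n.+1 nu) * hstar n.+1 nu s.
Proof.
elim: n nu s => [|n IH] nu s hs hsig hc hd.
  case/andP: hsig; case: nu hc hd => [|a [|]] //= hc hd _ _.
  have ha : a \in irange c d by rewrite mem_irange hc hd.
  rewrite (bigD1_seq a ha (irange_uniq c d)) /= eqxx mul1r big1 ?addr0 => [|k hk].
    by rewrite -[[:: a]]/(nseq 1 a) DimN_nseq rmorph1 mul1r.
  by rewrite eqseq_cons andbT eq_sym (negbTE hk) mul0r.
rewrite -[RHS](mulKf (natf_neq0 n)) -branching_rule // mulr_sumr.
under eq_bigr do rewrite /= sumnE big_map natr_sum mulr_suml.
rewrite exchange_big /=; apply: eq_big_seq => l hl.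
have [sig_l le_l le_l0] := signature_interl hsig hl.
have le_c : c <= l`_n := le_trans hc le_l.
have le_d : l`_0 <= d := le_trans le_l0 hd.
rewrite mulrBr mulrCA [X in _ - X]mulrCA.
rewrite -(IH l s hs) -?(IH l (s + 1) (nonintegralD1 hs)) //.
rewrite !mulr_sumr -sumrB mulr_sumr; apply: eq_bigr => k _.
by rewrite (hstar_nseqS _ _ hs); ring.
Qed.

End BranchingRule.

Definition cst_morph : {rmorphism rat -> {fraction {poly rat}}} :=
  (@FracField.tofrac {poly rat}) \o (@polyC rat).

Lemma nonintegral_tvar : nonintegral tvar.
Proof.
move=> z; rewrite /tvar -(rmorph_int (@FracField.tofrac {poly rat})) tofrac_eq.
apply/eqP => /(congr1 (fun p : {poly rat} => size p)).
by rewrite size_polyX -(rmorph_int (@polyC rat)) size_polyC; case: (_ != 0).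
Qed.

Theorem theorem3 (N : nat) (nu : seq int) :
  (1 <= N)%N -> is_signature N nu ->
  (forall k : int, (k < nu`_(N.-1)) || (nu`_0 < k) -> Fk N k nu = 0) /\
  Hstar N nu =
    \sum_(k <- irange nu`_(N.-1) nu`_0) cst (Fk N k nu) * ratk N k.
Proof.
case: N => [//|n] _ hsig; have [/eqP hs _] := andP hsig.
rewrite /Fk /DimKN subSS subn0; split=> [k hk|].
  case: (chains n [:: k] nu =P 0%N) => [-> | /eqP h]; first by rewrite mul0r.
  by have /andP[] := chains_support hs h; move: hk => /=; lia.
have hD : cst_morph (DimN n.+1 nu) != 0 by rewrite fmorph_eq0 DimN_neq0.
have ratkE k : ratk n.+1 k = hstar n.+1 (nseq n.+1 k) tvar.
  by apply: eq_bigr => j _; rewrite nth_nseq ltn_ord.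
rewrite -[LHS]/(hstar n.+1 nu tvar) -[LHS](mulKf hD).
rewrite -(sum_chains_hstar cst_morph nonintegral_tvar hsig (lexx _) (lexx _)).
rewrite mulr_sumr; apply: eq_bigr => k _.
rewrite ratkE -[cst _]/(cst_morph _) fmorph_div rmorph_nat.
by rewrite mulrA [_^-1 * _]mulrC.
Qed.
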